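(* Suppose condition (iv) of the context holds. Set $\theta_*:=d(2\alpha\beta-1)-2\beta$; let $\theta>\min\{\theta_*,s-2\beta\}$ if $\theta_*\ge0$, and $\theta=0$ otherwise. Then there exists $C>0$, independent of $h$, such that \[ \|(L^{-\beta}-L_h^{-\beta}\Pi_h)g\|_H\le C h^{\min\{d(2\alpha\beta-1),s\}}\|g\|_\theta \] for all $g\in\dot H^\theta$ and all sufficiently small $h\in(0,h_0)$.
   Context: $H$ is a separable real Hilbert space; $L\colon\mathscr{D}(L)\subset H\to H$ densely defined, self-adjoint, positive definite with compact inverse, $H$-orthonormal eigenvectors $\{e_j\}$, nondecreasing eigenvalues $\{\lambda_j\}$ with $c_\lambda j^\alpha\le\lambda_j\le C_\lambda j^\alpha$ ($\alpha,c_\lambda,C_\lambda>0$); $(S(t))_{t\ge0}$ the semigroup generated by $-L$. $\beta\in(0,1)$ and $2\alpha\beta>1$; $d\in\mathbb{N}$ is fixed (the exponent with $\dim V_h\propto h^{-d}$). For $\sigma\ge0$, $\dot H^\sigma:=\mathscr{D}(L^{\sigma/2})$ with $\|\psi\|_\sigma^2=\sum_j\lambda_j^\sigma(\psi,e_j)_H^2$. $(V_h)_{h\in(0,1)}$ are finite-dimensional subspaces of $\dot H^1$, $\Pi_h$ the $H$-orthogonal projection onto $V_h$, $L_h\colon V_h\to V_h$ given by $(L_h\psi_h,\phi_h)_H=\langle L\psi_h,\phi_h\rangle$, $(S_h(t))$ the semigroup on $V_h$ generated by $-L_h$. Condition (iv): there are $h_0\in(0,1)$ and $s>2\beta$ such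 that for $0\le\theta\le\sigma\le s$ there is $C_3>0$ with $\|(S(t)-S_h(t)\Pi_h)g\|_H\le C_3h^\sigma t^{(\theta-\sigma)/2}\|g\|_\theta$ for all $t>0$, $g\in\dot H^\theta$, $h\in(0,h_0)$. *)

From Stdlib Require Import Reals List.
From Coquelicot Require Import Coquelicot.
Open Scope R_scope.

(* The Hilbert space H is modelled, via the (orthonormal, complete) eigenbasis
   {e_j} of L, as l^2(N): an element is its coordinate sequence (psi, e_j)_H.
   Index j : nat (0-based) corresponds to the paper's index j+1. *)
Definition sq := nat -> R.

Definition in_H (x : sq) : Prop := ex_series (fun j => (x j) ^ 2).
Definition ipH (x y : sq) : R := Series (fun j => x j * y j).
Definition normH (x : sq) : R := sqrt (Series (fun j => (x j) ^ 2)).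
Definition sq_sub (x y : sq) : sq := fun j => x j - y j.

Definition in_Hdot (lam : nat -> R) (sigma : R) (x : sq) : Prop :=
  ex_series (fun j => Rpower (lam j) sigma * (x j) ^ 2).
Definition norm_dot (lam : nat -> R) (sigma : R) (x : sq) : R :=
  sqrt (Series (fun j => Rpower (lam j) sigma * (x j) ^ 2)).

Definition formL (lam : nat -> R) (x y : sq) : R :=
  Series (fun j => lam j * x j * y j).

Definition fsum (n : nat) (f : nat -> R) : R :=
  fold_right (fun i acc => f i + acc) 0 (List.seq 0 n).

Definition S_op (lam : nat -> R) (t : R) (g : sq) : sq :=
  fun j => exp (- t * lam j) * g j.
Definition Lpow (lam : nat -> R) (beta : R) (g : sq) : sq :=
  fun j => Rpower (lam j) (- beta) * g j.

(* Discrete spaces: V_h = span{ b h i | i < N h }, where (b h i)_i is an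
   H-orthonormal basis of V_h made of eigenvectors of L_h, with eigenvalues
   mu h i (i.e. <L b_i, b_k> = mu_i delta_ik). *)
Definition is_disc_eigenbasis (lam : nat -> R) (N : R -> nat)
    (b : R -> nat -> sq) (mu : R -> nat -> R) : Prop :=
  forall h, 0 < h < 1 ->
    (forall i, (i < N h)%nat -> in_Hdot lam 1 (b h i)) /\
    (forall i k, (i < N h)%nat -> (k < N h)%nat ->
        ipH (b h i) (b h k) = if Nat.eqb i k then 1 else 0) /\
    (forall i k, (i < N h)%nat -> (k < N h)%nat ->
        formL lam (b h i) (b h k) = if Nat.eqb i k then mu h i else 0).

Definition Pi_h (N : R -> nat) (b : R -> nat -> sq) (h : R) (g : sq) : sq :=
  fun j => fsum (N h) (fun i => ipH g (b h i) * b h i j).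
Definition Sh_Pi (N : R -> nat) (b : R -> nat -> sq) (mu : R -> nat -> R)
    (h t : R) (g : sq) : sq :=
  fun j => fsum (N h) (fun i => exp (- t * mu h i) * ipH g (b h i) * b h i j).
Definition Lhpow_Pi (N : R -> nat) (b : R -> nat -> sq) (mu : R -> nat -> R)
    (beta h : R) (g : sq) : sq :=
  fun j => fsum (N h) (fun i => Rpower (mu h i) (- beta) * ipH g (b h i) * b h i j).

Definition eigen_ok (lam : nat -> R) (alpha c_lam C_lam : R) : Prop :=
  0 < alpha /\ 0 < c_lam /\ 0 < C_lam /\
  (forall j, lam j <= lam (S j)) /\
  (forall j, c_lam * Rpower (INR (S j)) alpha <= lam j /\
             lam j <= C_lam * Rpower (INR (S j)) alpha).

Definition cond_iv (lam : nat -> R) (N : R -> nat) (b : R -> nat -> sq)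
    (mu : R -> nat -> R) (h0 s : R) : Prop :=
  forall theta sigma, 0 <= theta -> theta <= sigma -> sigma <= s ->
    exists C3, 0 < C3 /\
      forall t g h, 0 < t -> in_Hdot lam theta g -> 0 < h < h0 ->
        normH (sq_sub (S_op lam t g) (Sh_Pi N b mu h t g))
          <= C3 * Rpower h sigma * Rpower t ((theta - sigma) / 2)
                * norm_dot lam theta g.

From Stdlib Require Import Reals List Lra Lia.
From Coquelicot Require Import Coquelicot.
Open Scope R_scope.

(* Balakrishnan's formula [L^-beta = Gamma(beta)^-1 int_0^oo t^(beta-1) S(t) dt] and its
   discrete analogue write [(L^-beta - L_h^-beta Pi_h) g] as the same average of the semigroup
   error [E(t) = (S(t) - S_h(t) Pi_h) g]. With [rho = min (d (2 alpha beta - 1)) s], condition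
   (iv) for [(min theta rho, rho)] bounds [|E(t)|] by [h^rho t^((min theta rho - rho)/2) |g|_theta],
   which is integrable against [t^(beta-1)] at 0 since [theta > rho - 2 beta], and (iv) for
   [(0, s)] bounds it by [h^s t^(-s/2) |g|], integrable at infinity since [s > 2 beta].
   Coordinatewise in the eigenbasis both operators are finite combinations of [exp (- t lam)],
   for which the formula is the Gamma integral, and the norm is recovered by duality against
   finitely supported sequences. *)

(** * Finite sums and square-summable sequences *)

Lemma fsum_S n f : fsum (S n) f = fsum n f + f n.
Proof.
  unfold fsum. rewrite seq_S, fold_right_app. simpl.
  generalize (f n). induction (List.seq 0 n) as [|a l IH]; intros r; simpl; [lra|].
  rewrite IH. lra.
Qed.

Lemma fsum_ext n f g : (forall i, (i < n)%nat -> f i = g i) -> fsum n f = fsum n g.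
Proof.
  induction n as [|n IH]; intros H; [reflexivity|].
  rewrite !fsum_S, IH, (H n); [reflexivity | lia | intros; apply H; lia].
Qed.

Lemma fsum_plus n f g : fsum n (fun i => f i + g i) = fsum n f + fsum n g.
Proof. induction n as [|n IH]; [unfold fsum; simpl; lra|]. rewrite !fsum_S, IH. lra. Qed.

Lemma fsum_scal n k f : fsum n (fun i => k * f i) = k * fsum n f.
Proof. induction n as [|n IH]; [unfold fsum; simpl; lra|]. rewrite !fsum_S, IH. lra. Qed.

Lemma fsum_nonneg n f : (forall i, 0 <= f i) -> 0 <= fsum n f.
Proof.
  intros H. induction n as [|n IH]; [unfold fsum; simpl; lra|].
  rewrite fsum_S. specialize (H n). lra.
Qed.

Lemma fsum_mono n m f : (forall i, 0 <= f i) -> (n <= m)%nat -> fsum n f <= fsum m f.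
Proof.
  intros H Hnm. induction Hnm as [|m _ IH]; [lra|].
  rewrite fsum_S. specialize (H m). lra.
Qed.

Lemma sum_n_fsum a n : sum_n a n = fsum (S n) a.
Proof.
  induction n as [|n IH].
  - rewrite sum_O, fsum_S. unfold fsum; simpl. lra.
  - rewrite sum_Sn, IH, (fsum_S (S n)). reflexivity.
Qed.

Lemma fsum_le_Series a n : (forall i, 0 <= a i) -> ex_series a -> fsum n a <= Series a.
Proof.
  intros Ha Hex.
  assert (H : Rbar_le (fsum n a) (Series a)).
  { apply (is_lim_seq_le_loc (fun _ => fsum n a) (sum_n a));
      [| apply is_lim_seq_const | apply Series_correct, Hex].
    exists n. intros k Hk. rewrite sum_n_fsum. apply fsum_mono; [exact Ha | lia]. }
  exact H.
Qed.

Lemma Series_le_of_fsum_le a M : 0 <= M -> (forall n, fsum n a <= M) -> Series a <= M.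
Proof.
  intros HM H. unfold Series.
  assert (Hle : Rbar_le (Lim_seq (sum_n a)) (Lim_seq (fun _ => M))).
  { apply Lim_seq_le_loc. exists 0%nat. intros n _. rewrite sum_n_fsum. apply H. }
  rewrite Lim_seq_const in Hle.
  destruct (Lim_seq (sum_n a)); simpl in *; lra.
Qed.

Lemma in_H_ext (x y : sq) : (forall j, x j = y j) -> in_H x -> in_H y.
Proof.
  intros E H. apply (ex_series_ext (fun j => x j ^ 2)); [intros j; rewrite E |]; easy.
Qed.

Lemma in_H_lincomb (x y : sq) k l : in_H x -> in_H y -> in_H (fun j => k * x j + l * y j).
Proof.
  intros Hx Hy.
  apply (ex_series_le (fun j => (k * x j + l * y j) ^ 2) (fun j => 2 * k ^ 2 * x j ^ 2 + 2 * l ^ 2 * y j ^ 2)).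
  - intros j. rewrite Rabs_pos_eq by apply pow2_ge_0.
    pose proof (pow2_ge_0 (k * x j - l * y j)). simpl. nra.
  - apply (ex_series_plus (fun j => _ * _) (fun j => _ * _));
      apply (ex_series_scal_l _ (fun j => _ ^ 2)); assumption.
Qed.

Lemma in_H_fsum n (k : nat -> R) (v : nat -> sq) :
  (forall i, (i < n)%nat -> in_H (v i)) -> in_H (fun j => fsum n (fun i => k i * v i j)).
Proof.
  induction n as [|n IH]; intros H.
  - apply (ex_series_ext (fun _ => 0)); [intros; unfold fsum; simpl; ring |].
    exists 0. apply (is_lim_seq_ext (fun _ => 0) _ 0); [| apply is_lim_seq_const].
    intros n. rewrite sum_n_const. simpl. ring.
  - apply (in_H_ext (fun j => 1 * fsum n (fun i => k i * v i j) + k n * v n j));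
      [intros j; rewrite fsum_S; ring |].
    apply in_H_lincomb; [apply IH; intros | apply H]; auto.
Qed.
Lemma fsum_mul_le_sqrt J (y z : nat -> R) :
  fsum J (fun j => y j ^ 2) <= 1 ->
  fsum J (fun j => y j * z j) <= sqrt (fsum J (fun j => z j ^ 2)).
Proof.
  intros Hy.
  set (B := fsum J (fun j => y j * z j)). set (Z := fsum J (fun j => z j ^ 2)).
  assert (HZ : 0 <= Z) by (apply fsum_nonneg; intros; apply pow2_ge_0).
  assert (Hquad : forall e, 0 < e -> 2 * e * B <= e * e + Z).
  { intros e He.
    assert (Hsq : 0 <= e * e * fsum J (fun j => y j ^ 2) + (- 2 * e) * B + Z).
    { unfold B, Z. rewrite <- !fsum_scal, <- !fsum_plus.
      apply fsum_nonneg. intros j. pose proof (pow2_ge_0 (e * y j - z j)). nra. }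
    nra. }
  destruct (Rle_lt_or_eq_dec 0 Z HZ) as [HZpos | HZ0].
  - pose proof (sqrt_lt_R0 Z HZpos). pose proof (sqrt_sqrt Z HZ).
    specialize (Hquad (sqrt Z) ltac:(assumption)). nra.
  - rewrite <- HZ0, sqrt_0 in *.
    destruct (Rle_or_lt B 0) as [HB | HB]; [exact HB |].
    specialize (Hquad B HB). nra.
Qed.

Lemma fsum_mul_le_normH J (y : nat -> R) (z : sq) :
  fsum J (fun j => y j ^ 2) <= 1 -> in_H z -> fsum J (fun j => y j * z j) <= normH z.
Proof.
  intros Hy Hz. eapply Rle_trans; [apply fsum_mul_le_sqrt, Hy |].
  apply sqrt_le_1_alt, fsum_le_Series; [intros; apply pow2_ge_0 | exact Hz].
Qed.

Lemma normH_le_dual (x : sq) M : 0 <= M ->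
  (forall J (y : nat -> R), fsum J (fun j => y j ^ 2) <= 1 ->
     fsum J (fun j => y j * x j) <= M) ->
  normH x <= M.
Proof.
  intros HM H. unfold normH. rewrite <- (sqrt_square M HM).
  apply sqrt_le_1_alt, Series_le_of_fsum_le; [nra |]. intros J.
  set (Q := fsum J (fun j => x j ^ 2)).
  assert (HQ : 0 <= Q) by (apply fsum_nonneg; intros; apply pow2_ge_0).
  destruct (Rle_lt_or_eq_dec 0 Q HQ) as [HQpos | HQ0]; [| rewrite <- HQ0; nra].
  pose proof (sqrt_lt_R0 Q HQpos) as Hs. pose proof (sqrt_sqrt Q HQ) as Hss.
  specialize (H J (fun j => x j / sqrt Q)).
  assert (Hnorm : fsum J (fun j => (x j / sqrt Q) ^ 2) = 1).
  { rewrite (fsum_ext _ _ (fun j => / (sqrt Q * sqrt Q) * x j ^ 2)) by (intros; field; lra).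
    rewrite fsum_scal, Hss. fold Q. field. lra. }
  assert (Hpair : fsum J (fun j => x j / sqrt Q * x j) = sqrt Q).
  { rewrite (fsum_ext _ _ (fun j => / sqrt Q * x j ^ 2)) by (intros; field; lra).
    rewrite fsum_scal. fold Q. rewrite <- Hss at 2. field. lra. }
  cbv beta in H. rewrite Hnorm, Hpair in H. specialize (H (Rle_refl 1)).
  rewrite <- Hss. apply Rmult_le_compat; lra.
Qed.

(** * Elementary real analysis *)

Lemma exp_le x y : x <= y -> exp x <= exp y.
Proof. intros [H | ->]; [left; apply exp_increasing, H | right; reflexivity]. Qed.

Lemma Rpower_exp_l w a : Rpower (exp w) a = exp (a * w).
Proof. unfold Rpower. rewrite ln_exp. reflexivity. Qed.

Lemma Rpower_le_of_base_lt_1 h p q : 0 < h < 1 -> p <= q -> Rpower h q <= Rpower h p.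
Proof.
  intros Hh Hpq. unfold Rpower. apply exp_le.
  assert (ln h < 0) by (rewrite <- ln_1; apply ln_increasing; lra).
  nra.
Qed.

Lemma is_lim_seq_exp_affine k c : 0 < k -> is_lim_seq (fun n => exp (- k * INR n + c)) 0.
Proof.
  intros Hk.
  apply (is_lim_seq_ext (fun n => exp c * exp (- k) ^ n)).
  { intros n. rewrite exp_plus, <- Rpower_pow by apply exp_pos.
    unfold Rpower. rewrite ln_exp, Rmult_comm. do 2 f_equal. ring. }
  replace (Finite 0) with (Rbar_mult (exp c) 0) by (simpl; f_equal; ring).
  apply is_lim_seq_scal_l, is_lim_seq_geom.
  rewrite Rabs_pos_eq by apply Rlt_le, exp_pos.
  rewrite <- exp_0. apply exp_increasing. lra.
Qed.

Lemma is_RInt_exp_affine A k a b : k <> 0 ->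
  is_RInt (fun w => A * exp (k * w)) a b (A * exp (k * b) / k - A * exp (k * a) / k).
Proof.
  intros Hk.
  apply (is_RInt_derive (V := R_CompleteNormedModule) (fun w => A * exp (k * w) / k)).
  - intros x _. auto_derive; [auto | field; exact Hk].
  - intros x _. apply (ex_derive_continuous (K := R_AbsRing) (V := R_NormedModule)).
    auto_derive. auto.
Qed.

Lemma RInt_sym_le_of_exp_bounds (F : R -> R) A1 k1 A2 k2 :
  (forall a b, ex_RInt F a b) -> 0 <= A1 -> 0 < k1 -> 0 <= A2 -> 0 < k2 ->
  (forall w, F w <= A1 * exp (k1 * w)) -> (forall w, F w <= A2 * exp (- k2 * w)) ->
  forall x, 0 <= x -> RInt F (- x) x <= A1 / k1 + A2 / k2.
Proof.
  intros HF HA1 Hk1 HA2 Hk2 H1 H2 x Hx.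
  rewrite <- (RInt_Chasles (V := R_CompleteNormedModule) F (- x) 0 x) by auto.
  unfold plus; simpl. apply Rplus_le_compat.
  - pose proof (is_RInt_exp_affine A1 k1 (- x) 0 ltac:(lra)) as HI.
    apply Rle_trans with (RInt (fun w => A1 * exp (k1 * w)) (- x) 0).
    + apply RInt_le; [lra | auto | eexists; exact HI | intros; auto].
    + rewrite (is_RInt_unique _ _ _ _ HI), Rmult_0_r, exp_0.
      assert (0 <= A1 * exp (k1 * - x) / k1)
        by (apply Rmult_le_pos; [apply Rmult_le_pos, Rlt_le, exp_pos | apply Rlt_le,
              Rinv_0_lt_compat]; assumption).
      unfold Rdiv in *. lra.
  - pose proof (is_RInt_exp_affine A2 (- k2) 0 x ltac:(lra)) as HI.
    apply Rle_trans with (RInt (fun w => A2 * exp (- k2 * w)) 0 x).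
    + apply RInt_le; [lra | auto | eexists; exact HI | intros; auto].
    + rewrite (is_RInt_unique _ _ _ _ HI), Rmult_0_r, exp_0.
      assert (0 <= A2 * exp (- k2 * x) / k2)
        by (apply Rmult_le_pos; [apply Rmult_le_pos, Rlt_le, exp_pos | apply Rlt_le,
              Rinv_0_lt_compat]; assumption).
      replace (A2 * exp (- k2 * x) / - k2 - A2 * 1 / - k2)
        with (A2 / k2 - A2 * exp (- k2 * x) / k2) by (field; lra).
      lra.
Qed.

(** * The Gamma-function representation of negative powers *)

Definition gamma_density (beta v : R) : R := exp (beta * v - exp v).

Definition mellin_integrand (beta : R) (f : R -> R) (w : R) : R :=
  exp (beta * w) * f (exp w).

(* [mellin_repr beta f X] encodes [int_0^oo t^(beta-1) f t dt = Gamma(beta) X] after the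
   substitution [t = exp w], through symmetric truncations, so that no improper integral
   has to exist a priori. *)
Definition mellin_repr (beta : R) (f : R -> R) (X : R) : Prop :=
  (forall a b, ex_RInt (mellin_integrand beta f) a b) /\
  is_lim_seq (fun n : nat => RInt (mellin_integrand beta f) (- INR n) (INR n)
                             - RInt (gamma_density beta) (- INR n) (INR n) * X) 0.

(* A positive lower bound for [Gamma(beta) = int_R gamma_density beta], used in its place. *)
Definition gamma_lower (beta : R) : R := RInt (gamma_density beta) (-1) 1.

Lemma ex_RInt_gamma_density beta a b : ex_RInt (gamma_density beta) a b.
Proof.
  apply (ex_RInt_continuous (V := R_CompleteNormedModule)). intros z _.
  apply (ex_derive_continuous (K := R_AbsRing) (V := R_NormedModule)).
  unfold gamma_density. auto_derive. auto.
Qed.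

Lemma gamma_density_pos beta v : 0 < gamma_density beta v.
Proof. apply exp_pos. Qed.

Lemma abs_RInt_gamma_density_le beta a l M :
  (forall t, a - Rabs l <= t <= a + Rabs l -> gamma_density beta t <= M) ->
  Rabs (RInt (gamma_density beta) a (a + l)) <= Rabs l * M.
Proof.
  intros H.
  assert (Hpos : forall t, Rabs (gamma_density beta t) = gamma_density beta t)
    by (intros t; apply Rabs_pos_eq, Rlt_le, gamma_density_pos).
  destruct (Rle_or_lt 0 l) as [Hl | Hl].
  - rewrite (Rabs_pos_eq l Hl) in *.
    replace (l * M) with ((a + l - a) * M) by ring.
    apply abs_RInt_le_const; [lra | apply ex_RInt_gamma_density |].
    intros t Ht. rewrite Hpos. apply H. lra.
  - rewrite (Rabs_left l Hl) in *.
    rewrite <- opp_RInt_swap by apply ex_RInt_gamma_density.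
    change (Rabs (- RInt (gamma_density beta) (a + l) a) <= - l * M).
    rewrite Rabs_Ropp. replace (- l * M) with ((a - (a + l)) * M) by ring.
    apply abs_RInt_le_const; [lra | apply ex_RInt_gamma_density |].
    intros t Ht. rewrite Hpos. apply H. lra.
Qed.

Section Mellin.

Variable beta : R.
Hypothesis Hbeta : 0 < beta < 1.

(* The tails are controlled by [exp (beta v)] at [-oo] and by [exp (- (1 - beta) v)]
   at [+oo], using [1 + v <= exp v]. *)
Lemma is_lim_seq_RInt_gamma_density_shift l :
  is_lim_seq (fun n : nat => RInt (gamma_density beta) (- INR n + l) (INR n + l)
                             - RInt (gamma_density beta) (- INR n) (INR n)) 0.
Proof.
  apply is_lim_seq_abs_0.
  apply (is_lim_seq_le_le (fun _ => 0) _
    (fun n => Rabs l * exp (- (1 - beta) * INR n + (1 - beta) * Rabs l)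
            + Rabs l * exp (- beta * INR n + beta * Rabs l))).
  2: apply is_lim_seq_const.
  2: { replace (Finite 0) with (Finite (Rabs l * 0 + Rabs l * 0)) by (f_equal; ring).
       apply is_lim_seq_plus'; apply (is_lim_seq_scal_l _ (Rabs l) 0);
         apply is_lim_seq_exp_affine; lra. }
  intros n. split; [apply Rabs_pos |].
  set (x := INR n).
  assert (E : RInt (gamma_density beta) (- x + l) (x + l) - RInt (gamma_density beta) (- x) x
            = RInt (gamma_density beta) x (x + l)
              - RInt (gamma_density beta) (- x) (- x + l)).
  { rewrite <- (RInt_Chasles _ (- x + l) x (x + l)) by apply ex_RInt_gamma_density.
    rewrite <- (RInt_Chasles _ (- x + l) (- x) x) by apply ex_RInt_gamma_density.
    rewrite <- (opp_RInt_swap _ (- x) (- x + l)) by apply ex_RInt_gamma_density.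
    unfold plus, opp; simpl. ring. }
  rewrite E. eapply Rle_trans; [apply Rabs_triang |]. rewrite Rabs_Ropp.
  apply Rplus_le_compat; apply abs_RInt_gamma_density_le; intros t Ht;
    unfold gamma_density; apply exp_le.
  - pose proof (exp_ineq1_le t). nra.
  - pose proof (exp_pos t). nra.
Qed.

Lemma mellin_repr_ext f g X : (forall t, 0 < t -> f t = g t) ->
  mellin_repr beta f X -> mellin_repr beta g X.
Proof.
  intros Hfg [Hex Hlim].
  assert (HK : forall w, mellin_integrand beta f w = mellin_integrand beta g w)
    by (intros w; unfold mellin_integrand; rewrite Hfg by apply exp_pos; reflexivity).
  split.
  - intros a b. apply (ex_RInt_ext (V := R_NormedModule) (mellin_integrand beta f)); auto.
  - refine (is_lim_seq_ext _ _ _ _ Hlim). intros n.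
    rewrite (RInt_ext (mellin_integrand beta f) (mellin_integrand beta g)) by auto.
    reflexivity.
Qed.

Lemma mellin_repr_lincomb f g X Y k l : mellin_repr beta f X -> mellin_repr beta g Y ->
  mellin_repr beta (fun t => k * f t + l * g t) (k * X + l * Y).
Proof.
  intros [Fex Flim] [Gex Glim].
  assert (HK : forall w, mellin_integrand beta (fun t => k * f t + l * g t) w
     = plus (scal k (mellin_integrand beta f w)) (scal l (mellin_integrand beta g w))).
  { intros w. unfold mellin_integrand, plus, scal; simpl. unfold mult; simpl. ring. }
  assert (Hex : forall a b, ex_RInt (fun w => plus (scal k (mellin_integrand beta f w))
                                                   (scal l (mellin_integrand beta g w))) a b)
    by (intros; apply (ex_RInt_plus (V := R_NormedModule));
        apply (ex_RInt_scal (V := R_NormedModule)); auto).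
  split.
  - intros a b. apply (ex_RInt_ext (V := R_NormedModule)) with (2 := Hex a b). auto.
  - apply (is_lim_seq_ext (fun n =>
        k * (RInt (mellin_integrand beta f) (- INR n) (INR n)
             - RInt (gamma_density beta) (- INR n) (INR n) * X)
      + l * (RInt (mellin_integrand beta g) (- INR n) (INR n)
             - RInt (gamma_density beta) (- INR n) (INR n) * Y))).
    + intros n. rewrite (RInt_ext (V := R_CompleteNormedModule) _ _ _ _ (fun w _ => HK w)).
      rewrite (RInt_plus (V := R_CompleteNormedModule))
        by (apply (ex_RInt_scal (V := R_NormedModule)); auto).
      rewrite !(RInt_scal (V := R_CompleteNormedModule)) by auto.
      unfold plus, scal; simpl; unfold mult; simpl. ring.
    + replace (Finite 0) with (Finite (k * 0 + l * 0)) by (f_equal; ring).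
      apply is_lim_seq_plus'; apply (is_lim_seq_scal_l _ _ 0); assumption.
Qed.

Lemma mellin_repr_zero : mellin_repr beta (fun _ => 0) 0.
Proof.
  assert (HK : forall w, mellin_integrand beta (fun _ => 0) w = 0)
    by (intros; unfold mellin_integrand; ring).
  split.
  - intros a b. apply (ex_RInt_ext (fun _ => 0)); [intros; auto | apply ex_RInt_const].
  - apply (is_lim_seq_ext (fun _ => 0)); [| apply is_lim_seq_const].
    intros n. rewrite (RInt_ext _ _ _ _ (fun w _ => HK w)), RInt_const.
    unfold scal; simpl; unfold mult; simpl. ring.
Qed.

(* [t = exp w] turns [int_0^oo t^(beta-1) exp (- t lam) dt = lam^(-beta) Gamma(beta)]
   into a translate of [gamma_density] by [ln lam]. *)
Lemma mellin_repr_exp lam : 0 < lam ->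
  mellin_repr beta (fun t => exp (- t * lam)) (Rpower lam (- beta)).
Proof.
  intros Hl. set (c := ln lam).
  assert (HK : forall w, mellin_integrand beta (fun t => exp (- t * lam)) w
                = scal (Rpower lam (- beta)) (scal 1 (gamma_density beta (1 * w + c)))).
  { intros w. unfold mellin_integrand, gamma_density, scal, Rpower; simpl; unfold mult; simpl.
    rewrite !Rmult_1_l, exp_plus. unfold c. rewrite (exp_ln lam Hl), <- !exp_plus.
    f_equal. ring. }
  assert (Hex : forall a b, ex_RInt (fun w => scal (Rpower lam (- beta))
                                       (scal 1 (gamma_density beta (1 * w + c)))) a b)
    by (intros; apply (ex_RInt_scal (V := R_NormedModule)),
          (ex_RInt_comp_lin (V := R_NormedModule)), ex_RInt_gamma_density).
  assert (HI : forall a b, RInt (mellin_integrand beta (fun t => exp (- t * lam))) a b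
            = Rpower lam (- beta) * RInt (gamma_density beta) (a + c) (b + c)).
  { intros a b.
    rewrite (RInt_ext (V := R_CompleteNormedModule) _ _ a b (fun w _ => HK w)).
    rewrite (RInt_scal (V := R_CompleteNormedModule))
      by apply (ex_RInt_comp_lin (V := R_NormedModule)), ex_RInt_gamma_density.
    rewrite (RInt_comp_lin (V := R_CompleteNormedModule)) by apply ex_RInt_gamma_density.
    rewrite !Rmult_1_l. reflexivity. }
  split.
  - intros a b. apply (ex_RInt_ext (V := R_NormedModule)) with (2 := Hex a b). auto.
  - apply (is_lim_seq_ext (fun n => Rpower lam (- beta) *
        (RInt (gamma_density beta) (- INR n + c) (INR n + c)
         - RInt (gamma_density beta) (- INR n) (INR n)))).
    + intros n. rewrite HI. ring.
    + replace (Finite 0) with (Rbar_mult (Rpower lam (- beta)) 0) by (simpl; f_equal; ring).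
      apply is_lim_seq_scal_l, is_lim_seq_RInt_gamma_density_shift.
Qed.

Lemma mellin_repr_fsum n (f : nat -> R -> R) (X : nat -> R) :
  (forall i, (i < n)%nat -> mellin_repr beta (f i) (X i)) ->
  mellin_repr beta (fun t => fsum n (fun i => f i t)) (fsum n X).
Proof.
  induction n as [|n IH]; intros H.
  - apply (mellin_repr_ext (fun _ => 0)); [intros; reflexivity |]. apply mellin_repr_zero.
  - rewrite fsum_S. replace (fsum n X + X n) with (1 * fsum n X + 1 * X n) by ring.
    apply (mellin_repr_ext (fun t => 1 * fsum n (fun i => f i t) + 1 * f n t));
      [intros; rewrite fsum_S; ring |].
    apply mellin_repr_lincomb; [apply IH; intros | apply H]; auto.
Qed.

Lemma gamma_lower_pos : 0 < gamma_lower beta.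
Proof.
  unfold gamma_lower.
  apply Rlt_le_trans with (RInt (fun _ => exp (-1 - exp 1)) (-1) 1).
  - rewrite RInt_const. unfold scal; simpl; unfold mult; simpl.
    pose proof (exp_pos (-1 - exp 1)). lra.
  - apply RInt_le; [lra | apply ex_RInt_const | apply ex_RInt_gamma_density |].
    intros x Hx. unfold gamma_density. apply exp_le.
    assert (exp x <= exp 1) by (apply exp_le; lra). nra.
Qed.

Lemma gamma_lower_le_RInt n : (1 <= n)%nat ->
  gamma_lower beta <= RInt (gamma_density beta) (- INR n) (INR n).
Proof.
  intros Hn. unfold gamma_lower.
  assert (H1 : 1 <= INR n) by (apply (le_INR 1); lia).
  rewrite <- (RInt_Chasles (V := R_CompleteNormedModule) _ (- INR n) 1 (INR n))
    by apply ex_RInt_gamma_density.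
  rewrite <- (RInt_Chasles (V := R_CompleteNormedModule) _ (- INR n) (-1) 1)
    by apply ex_RInt_gamma_density.
  unfold plus; simpl.
  assert (0 <= RInt (gamma_density beta) (- INR n) (-1)) by
    (apply RInt_ge_0; [lra | apply ex_RInt_gamma_density | intros; apply Rlt_le, exp_pos]).
  assert (0 <= RInt (gamma_density beta) 1 (INR n)) by
    (apply RInt_ge_0; [lra | apply ex_RInt_gamma_density | intros; apply Rlt_le, exp_pos]).
  lra.
Qed.

Lemma mellin_repr_le_of_RInt_le f X B : mellin_repr beta f X -> 0 <= B ->
  (forall n : nat, RInt (mellin_integrand beta f) (- INR n) (INR n) <= B) ->
  X * gamma_lower beta <= B.
Proof.
  intros [_ Hlim] HB Hn. pose proof gamma_lower_pos as HK.
  destruct (Rle_or_lt X 0) as [HX | HX]; [nra |].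
  set (r := fun n : nat => RInt (mellin_integrand beta f) (- INR n) (INR n)
                          - RInt (gamma_density beta) (- INR n) (INR n) * X).
  assert (Hle : Rbar_le (X * gamma_lower beta) (B - 0)).
  { apply (is_lim_seq_le_loc (fun _ => X * gamma_lower beta) (fun n => B - r n)).
    - exists 1%nat. intros n Hn1. pose proof (gamma_lower_le_RInt n Hn1).
      specialize (Hn n). unfold r. nra.
    - apply is_lim_seq_const.
    - apply is_lim_seq_minus'; [apply is_lim_seq_const | exact Hlim]. }
  simpl in Hle. lra.
Qed.

Lemma mellin_repr_le f X A1 p1 A2 p2 :
  mellin_repr beta f X -> 0 <= A1 -> 0 <= A2 -> p2 + beta < 0 < p1 + beta ->
  (forall t, 0 < t -> f t <= A1 * Rpower t p1) ->
  (forall t, 0 < t -> f t <= A2 * Rpower t p2) ->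
  X * gamma_lower beta <= A1 / (p1 + beta) + A2 / (- (p2 + beta)).
Proof.
  intros Hf HA1 HA2 Hp H1 H2.
  assert (Hbound : forall A p, (forall t, 0 < t -> f t <= A * Rpower t p) ->
            forall w, mellin_integrand beta f w <= A * exp ((p + beta) * w)).
  { intros A p H w. unfold mellin_integrand.
    eapply Rle_trans; [apply Rmult_le_compat_l; [apply Rlt_le, exp_pos | apply H, exp_pos] |].
    rewrite Rpower_exp_l. replace ((p + beta) * w) with (beta * w + p * w) by ring.
    rewrite exp_plus. lra. }
  apply (mellin_repr_le_of_RInt_le _ _ _ Hf).
  - apply Rplus_le_le_0_compat; apply Rmult_le_pos, Rlt_le, Rinv_0_lt_compat; lra.
  - intros n. destruct Hf as [Hex _].
    apply (RInt_sym_le_of_exp_bounds _ _ _ _ _ Hex); try lra.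
    + exact (Hbound _ _ H1).
    + intros w. rewrite Ropp_involutive. exact (Hbound _ _ H2 w).
    + apply pos_INR.
Qed.

End Mellin.

(** * The spectral discretisation *)

Section Spectral.

Variables (lam : nat -> R) (c : R).
Hypothesis Hc : 0 < c.
Hypothesis Hlam : forall j, c <= lam j.

Lemma lam_pos j : 0 < lam j.
Proof. specialize (Hlam j). lra. Qed.

Lemma Rpower_weight_le th' th (x : sq) j : th' <= th ->
  Rpower (lam j) th' * x j ^ 2 <= Rpower c (th' - th) * (Rpower (lam j) th * x j ^ 2).
Proof.
  intros Hth.
  replace (Rpower (lam j) th') with (Rpower (lam j) (th' - th) * Rpower (lam j) th)
    by (rewrite <- Rpower_plus; f_equal; ring).
  assert (Hle : Rpower (lam j) (th' - th) <= Rpower c (th' - th)).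
  { unfold Rpower. apply exp_le. pose proof (ln_le c (lam j) Hc (Hlam j)). nra. }
  rewrite Rmult_assoc. apply Rmult_le_compat_r; [| exact Hle].
  apply Rmult_le_pos; [apply Rlt_le, exp_pos | apply pow2_ge_0].
Qed.

Lemma in_Hdot_antimono th' th (x : sq) : th' <= th -> in_Hdot lam th x -> in_Hdot lam th' x.
Proof.
  intros Hth Hx.
  apply (ex_series_le (fun j => Rpower (lam j) th' * x j ^ 2) (fun j => Rpower c (th' - th) * (Rpower (lam j) th * x j ^ 2))).
  - intros j. rewrite Rabs_pos_eq by (apply Rmult_le_pos; [apply Rlt_le, exp_pos | apply pow2_ge_0]).
    apply Rpower_weight_le, Hth.
  - apply (ex_series_scal_l _ (fun j => _ * _)), Hx.
Qed.

Lemma norm_dot_antimono th' th (x : sq) : th' <= th -> in_Hdot lam th x ->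
  norm_dot lam th' x <= sqrt (Rpower c (th' - th)) * norm_dot lam th x.
Proof.
  intros Hth Hx. unfold norm_dot.
  rewrite <- sqrt_mult_alt by apply Rlt_le, exp_pos.
  apply sqrt_le_1_alt. rewrite <- Series_scal_l.
  apply Series_le; [| apply (ex_series_scal_l _ (fun j => _ * _)), Hx].
  intros j. split; [apply Rmult_le_pos; [apply Rlt_le, exp_pos | apply pow2_ge_0] |].
  apply Rpower_weight_le, Hth.
Qed.

Lemma in_Hdot_0_in_H (x : sq) : in_Hdot lam 0 x -> in_H x.
Proof.
  apply ex_series_ext. intros j. rewrite Rpower_O by apply lam_pos. apply Rmult_1_l.
Qed.

Variables (N : R -> nat) (b : R -> nat -> sq) (mu : R -> nat -> R).
Hypothesis HV : is_disc_eigenbasis lam N b mu.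

Lemma disc_basis_in_H h i : 0 < h < 1 -> (i < N h)%nat -> in_H (b h i).
Proof.
  intros Hh Hi. destruct (HV h Hh) as (Hb & _).
  apply in_Hdot_0_in_H, (in_Hdot_antimono 0 1); [lra | apply Hb, Hi].
Qed.

Lemma disc_eigenvalue_ge h i : 0 < h < 1 -> (i < N h)%nat -> c <= mu h i.
Proof.
  intros Hh Hi. destruct (HV h Hh) as (Hb & Hortho & Hform).
  specialize (Hortho i i Hi Hi). specialize (Hform i i Hi Hi).
  rewrite Nat.eqb_refl in Hortho, Hform. rewrite <- Hform. unfold formL.
  unfold ipH in Hortho. rewrite <- (Rmult_1_r c), <- Hortho, <- Series_scal_l.
  apply Series_le.
  - intros j. pose proof (Rle_0_sqr (b h i j)). unfold Rsqr in *.
    pose proof (Hlam j). split; nra.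
  - apply (ex_series_ext (fun j => Rpower (lam j) 1 * b h i j ^ 2)); [| apply Hb, Hi].
    intros j. rewrite Rpower_1 by apply lam_pos. simpl. ring.
Qed.

Variable beta : R.
Hypothesis Hbeta : 0 < beta < 1.

Lemma mellin_repr_S_op (g : sq) j :
  mellin_repr beta (fun t => S_op lam t g j) (Lpow lam beta g j).
Proof.
  unfold S_op, Lpow.
  apply (mellin_repr_ext _ (fun t => g j * exp (- t * lam j) + 0 * 0));
    [intros; ring |].
  replace (Rpower (lam j) (- beta) * g j) with (g j * Rpower (lam j) (- beta) + 0 * 0)
    by ring.
  apply mellin_repr_lincomb; [apply mellin_repr_exp, lam_pos | apply mellin_repr_zero]; assumption.
Qed.

Lemma mellin_repr_Sh_Pi h (g : sq) j : 0 < h < 1 ->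
  mellin_repr beta (fun t => Sh_Pi N b mu h t g j) (Lhpow_Pi N b mu beta h g j).
Proof.
  intros Hh. unfold Sh_Pi, Lhpow_Pi. apply mellin_repr_fsum. intros i Hi.
  apply (mellin_repr_ext _ (fun t => ipH g (b h i) * b h i j * exp (- t * mu h i) + 0 * 0));
    [intros; ring |].
  replace (Rpower (mu h i) (- beta) * ipH g (b h i) * b h i j)
    with (ipH g (b h i) * b h i j * Rpower (mu h i) (- beta) + 0 * 0) by ring.
  apply mellin_repr_lincomb; [apply mellin_repr_exp | apply mellin_repr_zero]; try assumption.
  pose proof (disc_eigenvalue_ge h i Hh Hi). lra.
Qed.

Lemma mellin_repr_error_pairing h (g : sq) J (y : nat -> R) : 0 < h < 1 ->
  mellin_repr beta
    (fun t => fsum J (fun j => y j * sq_sub (S_op lam t g) (Sh_Pi N b mu h t g) j))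
    (fsum J (fun j => y j * sq_sub (Lpow lam beta g) (Lhpow_Pi N b mu beta h g) j)).
Proof.
  intros Hh. apply mellin_repr_fsum. intros j _. unfold sq_sub.
  apply (mellin_repr_ext _ (fun t => y j * S_op lam t g j + (- y j) * Sh_Pi N b mu h t g j));
    [intros; ring |].
  replace (y j * (Lpow lam beta g j - Lhpow_Pi N b mu beta h g j))
    with (y j * Lpow lam beta g j + (- y j) * Lhpow_Pi N b mu beta h g j) by ring.
  apply mellin_repr_lincomb; [apply mellin_repr_S_op | apply mellin_repr_Sh_Pi]; assumption.
Qed.

Lemma semigroup_error_in_H h (g : sq) t : 0 < h < 1 -> in_H g -> 0 < t ->
  in_H (sq_sub (S_op lam t g) (Sh_Pi N b mu h t g)).
Proof.
  intros Hh Hg Ht.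
  apply (in_H_ext (fun j => 1 * S_op lam t g j + (-1) * Sh_Pi N b mu h t g j));
    [intros; unfold sq_sub; ring |].
  apply in_H_lincomb.
  - apply (ex_series_le (fun j => S_op lam t g j ^ 2) (fun j => g j ^ 2)); [| exact Hg].
    intros j. unfold S_op. rewrite Rabs_pos_eq by apply pow2_ge_0.
    assert (He : exp (- t * lam j) <= 1).
    { rewrite <- exp_0. apply exp_le. pose proof (lam_pos j). nra. }
    pose proof (exp_pos (- t * lam j)).
    change ((exp (- t * lam j) * g j) ^ 2 <= g j ^ 2).
    rewrite Rpow_mult_distr. pose proof (pow2_ge_0 (g j)).
    assert (exp (- t * lam j) ^ 2 <= 1) by (simpl; nra). nra.
  - apply (in_H_fsum _ (fun i => exp (- t * mu h i) * ipH g (b h i)) (b h)).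
    intros i Hi. apply disc_basis_in_H; assumption.
Qed.

Lemma Lpow_error_le_of_semigroup_error h (g : sq) A1 p1 A2 p2 :
  0 < h < 1 -> in_H g -> 0 <= A1 -> 0 <= A2 -> p2 + beta < 0 < p1 + beta ->
  (forall t, 0 < t -> normH (sq_sub (S_op lam t g) (Sh_Pi N b mu h t g)) <= A1 * Rpower t p1) ->
  (forall t, 0 < t -> normH (sq_sub (S_op lam t g) (Sh_Pi N b mu h t g)) <= A2 * Rpower t p2) ->
  normH (sq_sub (Lpow lam beta g) (Lhpow_Pi N b mu beta h g))
    <= (A1 / (p1 + beta) + A2 / (- (p2 + beta))) / gamma_lower beta.
Proof.
  intros Hh Hg HA1 HA2 Hp H1 H2. pose proof (gamma_lower_pos beta Hbeta) as HK.
  apply normH_le_dual.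
  { apply Rdiv_le_0_compat; [| exact HK].
    apply Rplus_le_le_0_compat; apply Rdiv_le_0_compat; lra. }
  intros J y Hy. apply Rle_div_r; [exact HK |].
  assert (Hpair : forall t, 0 < t ->
    fsum J (fun j => y j * sq_sub (S_op lam t g) (Sh_Pi N b mu h t g) j)
      <= normH (sq_sub (S_op lam t g) (Sh_Pi N b mu h t g)))
    by (intros; apply fsum_mul_le_normH, semigroup_error_in_H; assumption).
  apply (mellin_repr_le beta Hbeta _ _ _ _ _ _ (mellin_repr_error_pairing h g J y Hh));
    try assumption; intros t Ht; (eapply Rle_trans; [apply Hpair, Ht |]); auto.
Qed.

Lemma Lpow_error_le h0 s rho theta :
  h0 <= 1 -> 2 * beta < s -> cond_iv lam N b mu h0 s ->
  0 <= rho <= s -> 0 <= theta -> rho - 2 * beta < theta ->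
  exists C, 0 < C /\ forall h g, 0 < h < h0 -> in_Hdot lam theta g ->
    normH (sq_sub (Lpow lam beta g) (Lhpow_Pi N b mu beta h g))
      <= C * Rpower h rho * norm_dot lam theta g.
Proof.
  intros Hh0 Hs Hiv Hrho Htheta Hgap.
  set (th1 := Rmin theta rho).
  assert (Hth1 : 0 <= th1 <= rho /\ th1 <= theta /\ rho - 2 * beta < th1).
  { unfold th1, Rmin. destruct (Rle_dec theta rho); lra. }
  destruct (Hiv th1 rho) as (C1 & HC1 & Hb1); try lra.
  destruct (Hiv 0 s) as (C2 & HC2 & Hb2); try lra.
  set (k1 := (th1 - rho) / 2 + beta). set (k2 := - ((0 - s) / 2 + beta)).
  set (c1 := C1 * sqrt (Rpower c (th1 - theta))). set (c2 := C2 * sqrt (Rpower c (0 - theta))).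
  assert (Hc12 : 0 < c1 /\ 0 < c2)
    by (split; apply Rmult_lt_0_compat; try apply sqrt_lt_R0, exp_pos; assumption).
  assert (Hk12 : 0 < k1 /\ 0 < k2) by (unfold k1, k2; lra).
  pose proof (gamma_lower_pos beta Hbeta) as HK.
  exists ((c1 / k1 + c2 / k2) / gamma_lower beta). split.
  { apply Rdiv_lt_0_compat; [apply Rplus_lt_0_compat; apply Rdiv_lt_0_compat |]; lra. }
  intros h g Hh Hg. assert (Hh1 : 0 < h < 1) by lra.
  set (G := norm_dot lam theta g). set (hr := Rpower h rho).
  assert (HG : 0 <= G) by apply sqrt_pos.
  assert (Hhr : 0 < hr) by apply exp_pos.
  assert (Hg1 : in_Hdot lam th1 g) by (apply (in_Hdot_antimono _ theta); tauto).
  assert (Hg0 : in_Hdot lam 0 g) by (apply (in_Hdot_antimono _ theta); [lra | exact Hg]).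
  replace ((c1 / k1 + c2 / k2) / gamma_lower beta * hr * G)
    with ((hr * G * c1 / k1 + hr * G * c2 / k2) / gamma_lower beta) by (field; lra).
  apply Lpow_error_le_of_semigroup_error; try assumption;
    try (apply Rmult_le_pos; [apply Rmult_le_pos |]; lra).
  - apply in_Hdot_0_in_H, Hg0.
  - lra.
  - intros t Ht. eapply Rle_trans; [exact (Hb1 t g h Ht Hg1 Hh) |].
    pose proof (norm_dot_antimono th1 theta g ltac:(tauto) Hg) as Hn. fold G in Hn.
    replace (hr * G * c1 * _) with (C1 * hr * Rpower t ((th1 - rho) / 2)
                                    * (sqrt (Rpower c (th1 - theta)) * G)) by (unfold c1; ring).
    apply Rmult_le_compat_l; [| exact Hn].
    apply Rmult_le_pos; [apply Rmult_le_pos |]; try apply Rlt_le, exp_pos; lra.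
  - intros t Ht. eapply Rle_trans; [exact (Hb2 t g h Ht Hg0 Hh) |].
    pose proof (norm_dot_antimono 0 theta g ltac:(lra) Hg) as Hn. fold G in Hn.
    pose proof (Rpower_le_of_base_lt_1 h rho s Hh1 (proj2 Hrho)) as Hhs. fold hr in Hhs.
    replace (hr * G * c2 * _) with (C2 * hr * Rpower t ((0 - s) / 2)
                                    * (sqrt (Rpower c (0 - theta)) * G)) by (unfold c2; ring).
    apply Rmult_le_compat; [| apply sqrt_pos | | exact Hn].
    + apply Rmult_le_pos; [apply Rmult_le_pos |]; try apply Rlt_le, exp_pos; lra.
    + apply Rmult_le_compat_r; [apply Rlt_le, exp_pos |]. apply Rmult_le_compat_l; lra.
Qed.

End Spectral.

Lemma eigen_ok_lower_bound lam alpha c C : eigen_ok lam alpha c C ->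
  0 < c /\ forall j, c <= lam j.
Proof.
  intros (Ha & Hc & _ & _ & Hbounds). split; [exact Hc |]. intros j.
  destruct (Hbounds j) as [Hlow _].
  assert (1 <= Rpower (INR (S j)) alpha).
  { rewrite <- (Rpower_O (INR (S j))) by (rewrite S_INR; pose proof (pos_INR j); lra).
    apply Rle_Rpower; [rewrite S_INR; pose proof (pos_INR j) |]; lra. }
  nra.
Qed.

Theorem lemma3p3
  (lam : nat -> R) (alpha c_lam C_lam beta : R) (d : nat)
  (N : R -> nat) (b : R -> nat -> sq) (mu : R -> nat -> R)
  (h0 s : R)
  (Heig : eigen_ok lam alpha c_lam C_lam)
  (Hbeta : 0 < beta < 1) (Hab : 2 * alpha * beta > 1)
  (HV : is_disc_eigenbasis lam N b mu)
  (Hh0 : 0 < h0 < 1) (Hs : s > 2 * beta)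
  (Hiv : cond_iv lam N b mu h0 s)
  (theta : R)
  (Htheta1 : INR d * (2 * alpha * beta - 1) - 2 * beta >= 0 ->
             theta > Rmin (INR d * (2 * alpha * beta - 1) - 2 * beta) (s - 2 * beta))
  (Htheta2 : INR d * (2 * alpha * beta - 1) - 2 * beta < 0 -> theta = 0) :
  exists C, 0 < C /\
    exists h1, 0 < h1 /\
      forall h g, 0 < h < h0 -> h < h1 -> in_Hdot lam theta g ->
        normH (sq_sub (Lpow lam beta g) (Lhpow_Pi N b mu beta h g))
          <= C * Rpower h (Rmin (INR d * (2 * alpha * beta - 1)) s)
               * norm_dot lam theta g.
Proof.
  destruct (eigen_ok_lower_bound _ _ _ _ Heig) as [Hc Hlam].
  set (D := INR d * (2 * alpha * beta - 1)) in *.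
  assert (HD : 0 <= D) by (apply Rmult_le_pos; [apply pos_INR | lra]).
  assert (Hrho : 0 <= Rmin D s <= s) by (split; [apply Rmin_glb | apply Rmin_r]; lra).
  assert (Htheta : 0 <= theta /\ Rmin D s - 2 * beta < theta).
  { destruct (Rlt_or_le (D - 2 * beta) 0) as [Hneg | Hnn].
    - rewrite (Htheta2 Hneg). pose proof (Rmin_l D s). lra.
    - specialize (Htheta1 (Rle_ge _ _ Hnn)). revert Htheta1.
      unfold Rmin. destruct (Rle_dec (D - 2 * beta) (s - 2 * beta)), (Rle_dec D s); lra. }
  destruct (Lpow_error_le lam c_lam Hc Hlam N b mu HV beta Hbeta h0 s (Rmin D s) theta)
    as (C & HC & Hbound); try tauto; try lra.
  exists C. split; [exact HC |]. exists 1. split; [lra |].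
  intros h g Hh _ Hg. exact (Hbound h g Hh Hg).
Qed.
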